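(* If there exists an $h\times h$ real Hadamard matrix with $h\equiv 1$ or $2\pmod 3$, then there exists an equiangular tight frame of $N$ vectors in $\mathbb{R}^M$ with \[ M=\tfrac{1}{3}(h+1)(2h+1),\qquad N=h(2h+1). \]
   Context: A real Hadamard matrix of size $h$ is an $h\times h$ matrix $\mathbf{H}$ with entries in $\{\pm1\}$ such that $\mathbf{H}\mathbf{H}^{T}=h\mathbf{I}$. An equiangular tight frame (ETF) of $N$ vectors in $\mathbb{R}^M$ is a sequence $\{\phi_i\}_{i=1}^N$ of nonzero vectors of equal norm such that $|\langle\phi_i,\phi_j\rangle|$ is the same for all $i\neq j$ and $\sum_i\phi_i\phi_i^{T}$ is a scalar multiple of the identity on $\mathbb{R}^M$. *)

From HB Require Import structures.
From mathcomp Require Import all_boot all_order all_algebra.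
From mathcomp Require Import reals.
Set Implicit Arguments. Unset Strict Implicit. Unset Printing Implicit Defensive.
Import Order.TTheory GRing.Theory Num.Theory.
Local Open Scope ring_scope.

Definition is_hadamard (R : realType) (h : nat) (H : 'M[R]_h) : Prop :=
  (forall i j, H i j = 1 \/ H i j = -1) /\ H *m H^T = (h%:R)%:M.

Definition dotv (R : realType) (M : nat) (u v : 'cV[R]_M) : R :=
  (u^T *m v) 0 0.

Definition is_ETF (R : realType) (M N : nat) (phi : 'I_N -> 'cV[R]_M) : Prop :=
  [/\ (forall i, phi i != 0),
      (forall i j, dotv (phi i) (phi i) = dotv (phi j) (phi j)),
      (forall i j k l, i != j -> k != l ->
         `|dotv (phi i) (phi j)| = `|dotv (phi k) (phi l)|) &
      (exists c : R, \sum_(i < N) phi i *m (phi i)^T = c%:M)].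

From HB Require Import structures.
From mathcomp Require Import all_boot all_order all_algebra.
From mathcomp Require Import reals.
From mathcomp Require Import zify ring.
Set Implicit Arguments. Unset Strict Implicit. Unset Printing Implicit Defensive.
Import Order.TTheory GRing.Theory Num.Theory.

(* A Steiner triple system on v = 2h - 1 points exists when h = 1, 2 (mod 3)
   (constructions of Bose and Skolem): any two points lie on exactly one of
   its b = v(v - 1)/6 blocks, and each point lies on h - 1 blocks.  Normalize
   the Hadamard matrix H so that its first row is constant.  For each point p
   and column j, put the h - 1 other entries of column j, scaled by sqrt 2, on
   the blocks through p, and 2 at the coordinate p.  Add the 2h columns of the
   Hadamard matrix H (x) [[1, 1], [1, -1]], spread over the v points and one
   extra coordinate of weight sqrt 3.  These h(2h + 1) vectors live in
   dimension b + v + 1 = (h + 1)(2h + 1)/3, all have squared norm 2h + 2 and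
   mutual inner products +-2 (two points share one block; Hadamard columns
   are orthogonal), and their frame operator is 6h times the identity
   (Hadamard rows are orthogonal). *)

Lemma sum_nat_indicator (T : finType) (Q A : pred T) :
  (\sum_(x | Q x) (A x : nat) = #|[set x | Q x && A x]|)%N.
Proof.
rewrite -sum1dep_card [RHS]big_mkcond [LHS]big_mkcond /=.
by apply: eq_bigr => x _; case: (Q x); case: (A x).
Qed.

(* A Steiner triple system in a form that is easy to check on explicit
   constructions: blocks of size at most 3 cover every pair, and there are
   no more blocks than in a Steiner triple system.  Double counting the
   incident pairs shows that each pair then lies in exactly one block and
   every block has size 3. *)
Definition is_sts (P : finType) (bl : {set {set P}}) :=
  [/\ (forall B, B \in bl -> #|B| <= 3)%N,
      (forall p q, p != q -> exists2 B, B \in bl & (p \in B) && (q \in B)) &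
      (6 * #|bl| <= #|P| * (#|P|).-1)%N].

Section SteinerTripleSystem.
Variables (P : finType) (bl : {set {set P}}).
Hypothesis bl_sts : is_sts bl.

Let npair p q := #|[set B in bl | (p \in B) && (q \in B)]|.

Lemma sum_pairs_at (p : P) (B : {set P}) :
  (\sum_(q | q != p) ((p \in B) && (q \in B) : nat))%N = ((p \in B) * (#|B|).-1)%N.
Proof.
case pB: (p \in B); last by rewrite big1.
rewrite mul1n sum_nat_indicator (cardsD1 p B) pB add1n /=.
by apply: eq_card => q; rewrite !inE andbC.
Qed.

Lemma sum_pairs (B : {set P}) :
  (\sum_p \sum_(q | q != p) ((p \in B) && (q \in B) : nat))%N = (#|B| * (#|B|).-1)%N.
Proof.
under eq_bigr => p _ do rewrite sum_pairs_at.
rewrite -big_distrl /=; congr (_ * _).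
by rewrite (sum_nat_indicator xpredT (mem B)); apply: eq_card => x; rewrite !inE.
Qed.

Lemma sum_npair :
  (\sum_p \sum_(q | q != p) npair p q)%N = (\sum_(B in bl) #|B| * (#|B|).-1)%N.
Proof.
under eq_bigr => p _ do under eq_bigr => q _ do rewrite /npair -sum_nat_indicator.
under eq_bigr => p _ do rewrite exchange_big /=.
by rewrite exchange_big /=; apply: eq_bigr => B _; rewrite sum_pairs.
Qed.

Lemma npair_gt0 p q : p != q -> (0 < npair p q)%N.
Proof.
case: bl_sts => _ cover _ /cover[B Bbl pqB].
by rewrite card_gt0; apply/set0Pn; exists B; rewrite inE Bbl.
Qed.

Lemma sts_pair_count :
  (\sum_p \sum_(q | q != p) npair p q)%N = (#|P| * (#|P|).-1)%N
  /\ (\sum_(B in bl) #|B| * (#|B|).-1)%N = (6 * #|bl|)%N.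
Proof.
case: bl_sts => le3 _ few.
have lower : (#|P| * (#|P|).-1 <= \sum_p \sum_(q | q != p) npair p q)%N.
  rewrite -sum_nat_const; apply: leq_sum => p _.
  rewrite -(cardC1 p) -sum1_card; apply: leq_sum => q qp; apply: npair_gt0.
  by rewrite eq_sym; move: qp; rewrite !inE.
have upper : (\sum_(B in bl) #|B| * (#|B|).-1 <= 6 * #|bl|)%N.
  rewrite mulnC -sum_nat_const; apply: leq_sum => B /le3.
  by case: #|B| => [|[|[|[|]]]].
rewrite sum_npair in lower *; split; apply/eqP; rewrite eqn_leq.
  by rewrite lower andbT (leq_trans upper).
by rewrite upper (leq_trans few) // (leq_trans lower).
Qed.

Lemma sts_npair p q : p != q -> npair p q = 1%N.
Proof.
have [sumE _] := sts_pair_count.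
have /leqif_sum tight : forall p, xpredT p ->
    (\sum_(q | q != p) 1 <= \sum_(q | q != p) npair p q
      ?= iff [forall (q | q != p), 1%N == npair p q])%N.
  move=> p0 _; apply: leqif_sum => q0 qp.
  by split; first by apply: npair_gt0; rewrite eq_sym.
have sum1E : (\sum_(i : P) \sum_(q | q != i) 1 = #|P| * (#|P|).-1)%N.
  rewrite -sum_nat_const; apply: eq_bigr => p0 _.
  by rewrite sum1dep_card -(cardC1 p0); apply: eq_card => x; rewrite !inE.
move: tight => [_]; rewrite sumE sum1E eqxx => /esym/forallP/(_ p)/forallP/(_ q).
by move=> /implyP pq_eq1 pq; apply/esym/eqP; apply: pq_eq1; rewrite eq_sym.
Qed.

Lemma sts_block_card B : B \in bl -> #|B| = 3%N.
Proof.
case: bl_sts => le3 _ _; have [_ sumE] := sts_pair_count.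
have /leqif_sum tight : forall B, B \in bl ->
    (#|B| * (#|B|).-1 <= 6 ?= iff (#|B| * (#|B|).-1 == 6))%N.
  move=> B0 /le3 B0le3; split=> //.
  by move: B0le3; case: #|B0| => [|[|[|[|]]]].
move: tight => [_]; rewrite sumE sum_nat_const mulnC eqxx.
move=> /esym/forallP/(_ B)/implyP eq6 Bbl.
by move: (eq6 Bbl) (le3 _ Bbl); case: #|B| => [|[|[|[|]]]].
Qed.

Lemma sts_replication p : (#|[set B in bl | p \in B]|).*2 = (#|P|).-1.
Proof.
have sumE : (\sum_(q | q != p) npair p q)%N = (#|P|).-1.
  rewrite -(cardC1 p) -sum1_card; apply: eq_big => [q|q qp]; first by rewrite !inE.
  by apply: sts_npair; rewrite eq_sym.
rewrite -sumE /npair.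
under eq_bigr => q _ do rewrite -sum_nat_indicator.
rewrite exchange_big /=.
under eq_bigr => B _ do rewrite sum_pairs_at.
rewrite -sum_nat_indicator -muln2 big_distrl /=; apply: eq_bigr => B Bbl.
by rewrite (sts_block_card Bbl); case: (p \in B).
Qed.

Lemma sts_num_blocks : (6 * #|bl| = #|P| * (#|P|).-1)%N.
Proof. by have [sumE <-] := sts_pair_count; rewrite -sumE sum_npair. Qed.

End SteinerTripleSystem.

Lemma ord3_neq_succ (i j : 'I_3) : i != j -> j = (i + 1)%R \/ i = (j + 1)%R.
Proof.
case: i => [[|[|[|//]]]] Hi; case: j => [[|[|[|//]]]] Hj //= _;
  first [left; exact/val_inj | right; exact/val_inj].
Qed.

Lemma cover_sym (P : finType) (bl : {set {set P}}) (a b : P) :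
  (exists2 B, B \in bl & (a \in B) && (b \in B)) ->
  (exists2 B, B \in bl & (b \in B) && (a \in B)).
Proof. by case=> B Bbl abB; exists B => //; rewrite andbC. Qed.

Lemma cards3_le (T : finType) (a b c : T) : (#|[set a; b; c]| <= 3)%N.
Proof.
apply: leq_trans (leq_card_setU _ _) _; rewrite cards1 addn1 ltnS.
by rewrite cards2; case: (a != b).
Qed.

Lemma sum_set2 (n : nat) (x z : 'I_n) : x != z ->
  (\sum_(w in [set x; z]) (w : nat) = x + z)%N.
Proof. by move=> xz; rewrite big_setU1 /= ?big_set1 // inE. Qed.

Lemma card_image_ord3 (T : finType) (f : 'I_3 -> T) : (#|[set f i | i : 'I_3]| <= 3)%N.
Proof. by apply: leq_trans (leq_imset_card _ _) _; rewrite card_ord. Qed.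

Lemma card_pair_block (T U : finType) (f : T -> U) (S : {set T}) (u : U) :
  #|S| = 2%N -> (#|f @: S :|: [set u]| <= 3)%N.
Proof.
move=> S2; apply: leq_trans (leq_card_setU _ _) _.
by rewrite cards1 addn1 ltnS -S2 leq_imset_card.
Qed.

Section Bose.
Variable n : nat.
Let m := n.*2.+1.

(* n+1 is the inverse of 2 modulo 2n+1: on a pair {x, y} this is the
   idempotent commutative quasigroup (x + y) / 2. *)
Definition bose_op (S : {set 'I_m}) : 'I_m :=
  inord (((\sum_(x in S) (x : nat)) * n.+1) %% m).
Definition bose_vertical (x : 'I_m) : {set 'I_m * 'I_3} := [set (x, i) | i : 'I_3].
Definition bose_block (S : {set 'I_m}) (i : 'I_3) : {set 'I_m * 'I_3} :=
  [set (x, i) | x in S] :|: [set (bose_op S, (i + 1)%R)].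
Definition bose_blocks : {set {set 'I_m * 'I_3}} :=
  [set bose_vertical x | x : 'I_m] :|:
  [set bose_block z.1 z.2 | z in setX [set S : {set 'I_m} | #|S| == 2%N] [set: 'I_3]].

Lemma bose_op_idem w : (w < m)%N -> ((w + w) * n.+1 %% m = w)%N.
Proof.
move=> wm; have -> : ((w + w) * n.+1 = w * m + w)%N by rewrite /m; nia.
by rewrite modnMDl modn_small.
Qed.

Lemma bose_op_solve x y : (x < m)%N -> (y < m)%N ->
  ((x + (y.*2 + (m - x)) %% m) * n.+1 %% m = y)%N.
Proof.
move=> xm ym; rewrite -modnMml modnDmr.
have -> : (x + (y.*2 + (m - x)) = y.*2 + m)%N by rewrite addnCA subnKC // ltnW.
rewrite modnDr modnMml.
have -> : (y.*2 * n.+1 = y * m + y)%N by rewrite /m; nia.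
by rewrite modnMDl modn_small.
Qed.

Lemma bose_block_in (x y : 'I_m) (i : 'I_3) : x != y ->
  bose_block [set x; y] i \in bose_blocks.
Proof.
move=> xy; rewrite inE; apply/orP; right; apply/imsetP.
by exists ([set x; y], i); rewrite // !inE cards2 xy.
Qed.

Lemma bose_cover_succ (x y : 'I_m) (i : 'I_3) : x != y ->
  exists2 B, B \in bose_blocks & ((x, i) \in B) && ((y, (i + 1)%R) \in B).
Proof.
move=> xy; pose z : 'I_m := inord ((y.*2 + (m - x)) %% m).
have zE : (z : nat) = ((y.*2 + (m - x)) %% m)%N by rewrite inordK // ltn_pmod.
have xzE : ((x + z) * n.+1 %% m = y)%N by rewrite zE bose_op_solve.
have xz : x != z.
  apply: contra xy => /eqP xz; apply/eqP/val_inj => /=.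
  by rewrite -xzE -xz bose_op_idem.
exists (bose_block [set x; z] i); first exact: bose_block_in.
rewrite /bose_block.
have -> : bose_op [set x; z] = y by rewrite /bose_op sum_set2 // xzE inord_val.
by rewrite !in_setU set11 orbT andbT imset_f // !inE eqxx.
Qed.

Lemma bose_sts : is_sts bose_blocks.
Proof.
split.
- move=> B; rewrite inE => /orP[/imsetP[x _ ->]|/imsetP[[S i] /setXP[]]].
    exact: card_image_ord3.
  by rewrite inE => /eqP S2 _ ->; apply: card_pair_block.
- move=> [x i] [y j] _.
  have [<-|xy] := eqVneq x y.
    exists (bose_vertical x); first by rewrite inE imset_f.
    by apply/andP; split; apply/imsetP; [exists i | exists j].
  have [<-|ij] := eqVneq i j.
    exists (bose_block [set x; y] i); first exact: bose_block_in.
    by rewrite !in_setU !imset_f // !inE eqxx ?orbT.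
  case: (ord3_neq_succ ij) => ->; first exact: bose_cover_succ.
  by apply: cover_sym; apply: bose_cover_succ; rewrite eq_sym.
- apply: (@leq_trans (6 * (m + 'C(m, 2) * 3))).
    rewrite leq_mul2l; apply: leq_trans (leq_card_setU _ _) _; apply: leq_add.
      by apply: leq_trans (leq_imset_card _ _) _; rewrite card_ord.
    apply: leq_trans (leq_imset_card _ _) _.
    by rewrite cardsX cardsT card_ord card_draws card_ord.
  rewrite card_prod !card_ord bin2.
  have -> : (m * m.-1 = (m * n).*2)%N by rewrite /m /= -doubleMr.
  rewrite doubleK /m; nia.
Qed.

End Bose.

(* Skolem's construction of a Steiner triple system on 3(2n)+1 points;
   [None] is the point at infinity. *)
Section Skolem.
Variable n' : nat.
Let n := n'.+1.
Let m := (n'.*2).+2.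
Let mE : m = n.*2. Proof. by rewrite /m /n doubleS. Qed.

(* Composed with (x + y) mod 2n, this gives the half-idempotent commutative
   quasigroup of order 2n: x o x is x or x - n. *)
Definition skolem_half (s : nat) : nat := if odd s then (n + s./2)%N else s./2.
Definition skolem_half_inv (y : nat) : nat :=
  if (y < n)%N then y.*2 else (y - n).*2.+1.

Lemma skolem_half_inv_lt y : (y < m)%N -> (skolem_half_inv y < m)%N.
Proof.
rewrite mE /skolem_half_inv => ym; case: (ltnP y n) => yn; rewrite -!muln2 in ym *; lia.
Qed.

Lemma skolem_half_invK y : (y < m)%N -> skolem_half (skolem_half_inv y) = y.
Proof.
rewrite mE /skolem_half_inv /skolem_half => ym; case: (ltnP y n) => yn.
  by rewrite odd_double doubleK.
by rewrite /= odd_double /= uphalf_double subnKC.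
Qed.

Lemma skolem_half_double x : (x < m)%N ->
  skolem_half (x.*2 %% m) = (if (x < n)%N then x else x - n)%N.
Proof.
move=> xm; case: (ltnP x n) => xn.
  rewrite modn_small; last by rewrite mE ltn_double.
  by rewrite /skolem_half odd_double doubleK.
have -> : (x.*2 %% m = (x - n).*2)%N.
  have -> : (x.*2 = (x - n).*2 + m)%N by rewrite mE -doubleD subnK.
  rewrite modnDr modn_small // mE ltn_double; rewrite mE in xm.
  rewrite -!muln2 in xm *; lia.
by rewrite /skolem_half odd_double doubleK.
Qed.

Definition skolem_op (S : {set 'I_m}) : 'I_m :=
  inord (skolem_half ((\sum_(x in S) (x : nat)) %% m)).
Definition skolem_vertical (x : 'I_n) : {set option ('I_m * 'I_3)} :=
  [set Some (inord x, i) | i : 'I_3].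
Definition skolem_infinity_block (x : 'I_n) (i : 'I_3) : {set option ('I_m * 'I_3)} :=
  [set None; Some (inord (x + n), i); Some (inord x, (i + 1)%R)].
Definition skolem_block (S : {set 'I_m}) (i : 'I_3) : {set option ('I_m * 'I_3)} :=
  [set Some (x, i) | x in S] :|: [set Some (skolem_op S, (i + 1)%R)].
Definition skolem_blocks : {set {set option ('I_m * 'I_3)}} :=
  [set skolem_vertical x | x : 'I_n] :|:
  [set skolem_infinity_block z.1 z.2 | z : 'I_n * 'I_3] :|:
  [set skolem_block z.1 z.2 | z in setX [set S : {set 'I_m} | #|S| == 2%N] [set: 'I_3]].

Lemma skolem_vertical_in x : skolem_vertical x \in skolem_blocks.
Proof. by rewrite !inE imset_f. Qed.

Lemma skolem_infinity_block_in x i : skolem_infinity_block x i \in skolem_blocks.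
Proof. by rewrite !inE; apply/orP; left; apply/orP; right; apply/imsetP; exists (x, i). Qed.

Lemma skolem_block_in (x z : 'I_m) i : x != z -> skolem_block [set x; z] i \in skolem_blocks.
Proof.
move=> xz; rewrite inE; apply/orP; right; apply/imsetP.
by exists ([set x; z], i); rewrite // !inE cards2 xz.
Qed.

Lemma addn_subn_mod x a : (x < m)%N -> (a < m)%N -> ((x + (a + (m - x)) %% m) %% m = a)%N.
Proof.
move=> xm am; rewrite modnDmr.
have -> : (x + (a + (m - x)) = a + m)%N by rewrite addnCA subnKC // ltnW.
by rewrite modnDr modn_small.
Qed.

Lemma skolem_cover_succ (x y : 'I_m) (i : 'I_3) : exists2 B, B \in skolem_blocks &
  (Some (x, i) \in B) && (Some (y, (i + 1)%R) \in B).
Proof.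
have [xxE|xxN] := eqVneq (y : nat) (skolem_half (x.*2 %% m)).
  rewrite skolem_half_double // in xxE; move: xxE; case: ltnP => xn yE.
    exists (skolem_vertical (Ordinal xn)); first exact: skolem_vertical_in.
    have -> : y = x by apply: val_inj.
    by apply/andP; split; apply/imsetP; [exists i | exists (i + 1)%R]; rewrite //= inord_val.
  have x2n : (x < n.*2)%N by rewrite -mE ltn_ord.
  have yn : (y < n)%N by rewrite yE; rewrite -!muln2 in x2n; lia.
  exists (skolem_infinity_block (Ordinal yn) i); first exact: skolem_infinity_block_in.
  rewrite /skolem_infinity_block /=.
  have -> : (inord (y + n) : 'I_m) = x.
    by apply: val_inj; rewrite /= yE subnK // inordK // ltn_ord.
  by rewrite /= inord_val !inE !eqxx ?orbT.
pose z : 'I_m := inord ((skolem_half_inv y + (m - x)) %% m).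
have zE : (z : nat) = ((skolem_half_inv y + (m - x)) %% m)%N by rewrite inordK // ltn_pmod.
have xzE : ((x + z) %% m = skolem_half_inv y)%N.
  by rewrite zE addn_subn_mod // skolem_half_inv_lt.
have xz : x != z.
  apply: contra xxN => /eqP xz; apply/eqP.
  by rewrite -{1}(skolem_half_invK (ltn_ord y)) -xzE -xz addnn.
exists (skolem_block [set x; z] i); first exact: skolem_block_in.
rewrite /skolem_block.
have -> : skolem_op [set x; z] = y.
  by rewrite /skolem_op sum_set2 // xzE skolem_half_invK ?inord_val // ltn_ord.
by rewrite !in_setU set11 orbT andbT imset_f // !inE eqxx.
Qed.

Lemma skolem_cover_infinity (y : 'I_m) (j : 'I_3) :
  exists2 B, B \in skolem_blocks & (None \in B) && (Some (y, j) \in B).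
Proof.
case: (ltnP y n) => yn.
  exists (skolem_infinity_block (Ordinal yn) (j - 1)%R).
    exact: skolem_infinity_block_in.
  by rewrite /skolem_infinity_block /= inord_val subrK !inE !eqxx /= ?orbT.
have y2n : (y < n.*2)%N by rewrite -mE ltn_ord.
have yn' : (y - n < n)%N by rewrite -!muln2 in y2n; lia.
exists (skolem_infinity_block (Ordinal yn') j); first exact: skolem_infinity_block_in.
rewrite /skolem_infinity_block /=.
have -> : (inord (y - n + n) : 'I_m) = y.
  by apply: val_inj; rewrite /= subnK // inordK // ltn_ord.
by rewrite !inE !eqxx /= ?orbT.
Qed.

Lemma skolem_sts : is_sts skolem_blocks.
Proof.
split.
- move=> B; rewrite !inE.
  move=> /orP[/orP[/imsetP[x _ ->]|/imsetP[[x i] _ ->]]|/imsetP[[S i] /setXP[]]].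
  + exact: card_image_ord3.
  + exact: cards3_le.
  by rewrite inE => /eqP S2 _ ->; apply: card_pair_block.
- move=> [[x i]|] [[y j]|] //= xiyj.
  + case: (eqVneq i j) xiyj => [<- xiyj|ij _].
      have xy : x != y by apply: contra xiyj => /eqP ->.
      exists (skolem_block [set x; y] i); first exact: skolem_block_in.
      by rewrite !in_setU !imset_f // !inE eqxx ?orbT.
    case: (ord3_neq_succ ij) => ->; first exact: skolem_cover_succ.
    by apply: cover_sym; apply: skolem_cover_succ.
  + by apply: cover_sym; apply: skolem_cover_infinity.
  + exact: skolem_cover_infinity.
- apply: (@leq_trans (6 * (n + n * 3 + 'C(m, 2) * 3))).
    rewrite leq_mul2l; apply: leq_trans (leq_card_setU _ _) _; apply: leq_add.
      apply: leq_trans (leq_card_setU _ _) _; apply: leq_add.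
        by apply: leq_trans (leq_imset_card _ _) _; rewrite card_ord.
      by apply: leq_trans (leq_imset_card _ _) _; rewrite card_prod !card_ord.
    apply: leq_trans (leq_imset_card _ _) _.
    by rewrite cardsX cardsT card_ord card_draws card_ord.
  rewrite card_option card_prod !card_ord bin2.
  have -> : (m * m.-1 = (n * m.-1).*2)%N by rewrite mE -doubleMl.
  rewrite doubleK mE -!muln2; nia.
Qed.

End Skolem.

Lemma sts_exists h : (h %% 3 = 1 \/ h %% 3 = 2)%N ->
  exists (P : finType) (bl : {set {set P}}), #|P| = (h.*2).-1 /\ is_sts bl.
Proof.
move=> hmod3; have hE := divn_eq h 3; set t := (h %/ 3)%N in hE.
case: hmod3 => hmod; rewrite hmod in hE.
  case: t hE => [|n'] hE.
    exists 'I_1, set0; rewrite hE card_ord; split=> //.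
    by split=> [B|p q|]; rewrite ?inE ?cards0 // !ord1.
  exists (option ('I_(n'.*2).+2 * 'I_3)), (skolem_blocks n'); split; last exact: skolem_sts.
  rewrite card_option card_prod !card_ord hE -!muln2; lia.
exists ('I_(t.*2).+1 * 'I_3)%type, (bose_blocks t); split; last exact: bose_sts.
rewrite card_prod !card_ord hE -!muln2; lia.
Qed.

Local Open Scope ring_scope.

Definition hadamard_fun (R : nzRingType) (T U : finType) (n : nat) (X : T -> U -> R) :=
  [/\ (forall t u, X t u = 1 \/ X t u = -1),
      (forall t t', \sum_u X t u * X t' u = (t == t')%:R * n%:R) &
      (forall u u', \sum_t X t u * X t u' = (u == u')%:R * n%:R)].

Lemma pm1_mul (R : nzRingType) (x y : R) : x = 1 \/ x = -1 -> y = 1 \/ y = -1 ->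
  x * y = 1 \/ x * y = -1.
Proof. by case=> ->; case=> ->; rewrite ?mulrNN ?mul1r ?mulr1; tauto. Qed.

Lemma pm1_sq (R : nzRingType) (x : R) : x = 1 \/ x = -1 -> x * x = 1.
Proof. by case=> ->; rewrite ?mulrNN mulr1. Qed.

Lemma hadamard_mx_fun (R : realType) (h : nat) (H : 'M[R]_h) :
  is_hadamard H -> hadamard_fun h (fun i j => H i j).
Proof.
case=> pm HHt; have HtH : H^T *m H = (h%:R : R)%:M.
  case: h H pm HHt => [|k] H _ HHt; first by apply/matrixP => -[].
  have : H *m (k.+1%:R^-1 *: H^T) = 1%:M.
    by rewrite -scalemxAr HHt scale_scalar_mx mulVf ?pnatr_eq0.
  move/mulmx1C => HHt_inv.
  by rewrite -[H^T](@scalerKV _ _ k.+1%:R) ?pnatr_eq0 // -scalemxAl HHt_inv scalemx1.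
split=> // [i i'|j j'].
  by move/matrixP: HHt => /(_ i i'); rewrite !mxE mulr_natl => <-;
    apply: eq_bigr => j _; rewrite mxE.
by move/matrixP: HtH => /(_ j j'); rewrite !mxE mulr_natl => <-;
  apply: eq_bigr => i _; rewrite mxE.
Qed.

Definition card_bij (A B : finType) (E : #|A| = #|B|) (x : A) : B :=
  enum_val (cast_ord E (enum_rank x)).

Lemma card_bij_bij (A B : finType) (E : #|A| = #|B|) : bijective (card_bij E).
Proof.
exists (card_bij (esym E)) => x; rewrite /card_bij enum_valK.
  by rewrite cast_ordK enum_rankK.
by rewrite cast_ordKV enum_rankK.
Qed.

Lemma sum_pair (R : nmodType) (A B : finType) (G : A * B -> R) :
  \sum_x G x = \sum_a \sum_b G (a, b).
Proof. by rewrite pair_big; apply: eq_bigr => -[]. Qed.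

Lemma sum_unit (R : nmodType) (G : unit -> R) : \sum_(u : unit) G u = G tt.
Proof. by rewrite (big_pred1 tt) // => -[]. Qed.

Section HadamardFun.
Variables (R : comNzRingType) (T U : finType) (n : nat) (X : T -> U -> R).
Hypothesis X_had : hadamard_fun n X.

Lemma hadamard_fun_sq t u : X t u * X t u = 1.
Proof. by case: X_had => pm _ _; apply: pm1_sq. Qed.

Lemma hadamard_fun_reindex (T' : finType) (f : T' -> T) : bijective f ->
  hadamard_fun n (fun t u => X (f t) u).
Proof.
case: X_had => pm row col fK; split=> // [t t'|u u'].
  by rewrite row (bij_eq fK).
by rewrite -col (reindex f) //; apply: onW_bij.
Qed.

Lemma hadamard_fun_normalize t0 : hadamard_fun n (fun t u => X t u * X t0 u).
Proof.
case: X_had => pm row col; split=> [t u|t t'|u u'].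
- exact: pm1_mul.
- rewrite -row; apply: eq_bigr => u _.
  by rewrite mulrACA hadamard_fun_sq mulr1.
- transitivity (X t0 u * X t0 u' * \sum_t X t u * X t u').
    by rewrite big_distrr; apply: eq_bigr => t _ /=; ring.
  rewrite col; have [<-|_] := eqVneq u u'; last by rewrite !mul0r mulr0.
  by rewrite hadamard_fun_sq mul1r.
Qed.

Definition sign_of (b : bool) : R := if b then -1 else 1.

Lemma sum_sign_of a a' :
  \sum_(b : bool) sign_of (a && b) * sign_of (a' && b) = (a == a')%:R * 2.
Proof. by rewrite big_bool; case: a; case: a'; rewrite /sign_of /=; ring. Qed.

(* Sylvester doubling: the Kronecker product with [[1, 1], [1, -1]]. *)
Lemma hadamard_fun_double :
  hadamard_fun n.*2 (fun (s : T * bool) (e : U * bool) => X s.1 e.1 * sign_of (s.2 && e.2)).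
Proof.
case: X_had => pm row col; split=> [s e|s s'|e e'].
- by apply: pm1_mul => //; rewrite /sign_of; case: (_ && _); tauto.
- rewrite sum_pair /=.
  transitivity (\sum_u X s.1 u * X s'.1 u *
                \sum_(b : bool) sign_of (s.2 && b) * sign_of (s'.2 && b)).
    by apply: eq_bigr => u _; rewrite big_distrr; apply: eq_bigr => b _ /=; ring.
  rewrite sum_sign_of -big_distrl /= row.
  case: s s' => [t a] [t' a'] /=; rewrite xpair_eqE -muln2 natrM.
  by case: (t == t'); case: (a == a'); rewrite /= ?mul0r ?mulr0 ?mul1r ?mulr1.
- rewrite sum_pair /=.
  transitivity (\sum_t X t e.1 * X t e'.1 *
                \sum_(b : bool) sign_of (e.2 && b) * sign_of (e'.2 && b)).
    apply: eq_bigr => t _; rewrite big_distrr; apply: eq_bigr => b _ /=.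
    by rewrite (andbC b) (andbC b); ring.
  rewrite sum_sign_of -big_distrl /= col.
  case: e e' => [u a] [u' a'] /=; rewrite xpair_eqE -muln2 natrM.
  by case: (u == u'); case: (a == a'); rewrite /= ?mul0r ?mulr0 ?mul1r ?mulr1.
Qed.

End HadamardFun.

Section SteinerFrame.
Variables (R : realType) (k : nat).
Local Notation h := k.+1.
Variables (P : finType) (bl : {set {set P}}).
Hypothesis bl_sts : is_sts bl.
Hypothesis card_P : #|P| = (h.*2).-1.

Definition blocks_at p := [set B in bl | p \in B].

Lemma card_blocks_at p : #|{: {B | B \in blocks_at p}}| = #|{: 'I_k}|.
Proof.
rewrite card_sig card_ord; apply: double_inj.
have := sts_replication bl_sts p; rewrite card_P doubleS /= => <-.
by congr (_.*2); apply: eq_card.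
Qed.

Definition block_index p (B : {set P}) : option 'I_k :=
  omap (card_bij (card_blocks_at p)) (insub B : option {B | B \in blocks_at p}).

Lemma block_index_none p B : B \notin blocks_at p -> block_index p B = None.
Proof. by move=> pB; rewrite /block_index insubN. Qed.

Lemma block_index_some p B : B \in blocks_at p -> exists a, block_index p B = Some a.
Proof. by move=> pB; rewrite /block_index insubT /=; eexists. Qed.

Lemma block_index_inj p B B' a :
  block_index p B = Some a -> block_index p B' = Some a -> B = B'.
Proof.
rewrite /block_index; case: insubP => [x _ <-|] //=; case: insubP => [x' _ <-|] //=.
by move=> [<-] /= [] /(bij_inj (card_bij_bij _)) ->.
Qed.

Lemma sum_block_index p (g : 'I_k -> R) :
  \sum_(B in blocks_at p) oapp g 0 (block_index p B) = \sum_a g a.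
Proof.
rewrite big_sub /=; under eq_bigr => x _ do rewrite /block_index valK /=.
by rewrite [RHS](reindex _ (onW_bij _ (card_bij_bij (card_blocks_at p)))).
Qed.

Variable H : 'I_h -> 'I_h -> R.
Hypothesis H_had : hadamard_fun h H.
Hypothesis H_row0 : forall j, H ord0 j = 1.

(* The k rows of H other than the constant one, spread over the blocks
   through p. *)
Definition steiner_entry p B j : R :=
  oapp (fun a => H (lift ord0 a) j) 0 (block_index p B).

Lemma steiner_entry_out p B j : B \notin blocks_at p -> steiner_entry p B j = 0.
Proof. by move=> pB; rewrite /steiner_entry block_index_none. Qed.

Lemma steiner_entry_norm p B j : B \in blocks_at p -> `|steiner_entry p B j| = 1.
Proof.
move=> /block_index_some[a Ba]; rewrite /steiner_entry Ba /=; case: H_had => pm _ _.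
by case: (pm (lift ord0 a) j) => ->; rewrite ?normrN normr1.
Qed.

Lemma sum_steiner_entry_same p j l :
  \sum_(B in bl) steiner_entry p B j * steiner_entry p B l = (j == l)%:R * h%:R - 1.
Proof.
case: H_had => _ _ col.
rewrite (bigID (mem (blocks_at p))) /= [X in _ + X]big1 ?addr0; last first.
  by move=> B /andP[_ pB]; rewrite steiner_entry_out ?mul0r.
have -> : \sum_(B in bl | B \in blocks_at p) steiner_entry p B j * steiner_entry p B l =
   \sum_(B in blocks_at p) oapp (fun a => H (lift ord0 a) j * H (lift ord0 a) l) 0
                                (block_index p B).
  apply: eq_big => [B|B _]; first by apply: andb_idl; rewrite inE => /andP[].
  by rewrite /steiner_entry; case: (block_index p B) => //=; rewrite mul0r.
by rewrite sum_block_index -col big_ord_recl !H_row0 mul1r addrC addKr.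
Qed.

Lemma sum_steiner_entry_diff p q j l : p != q -> exists2 e : R, `|e| = 1 &
  \sum_(B in bl) steiner_entry p B j * steiner_entry q B l = e.
Proof.
move=> pq; have [B0 pqB0] := cards1P (introT eqP (sts_npair bl_sts pq)).
have : B0 \in [set B in bl | (p \in B) && (q \in B)] by rewrite pqB0 set11.
rewrite inE => /andP[B0bl /andP[pB0 qB0]].
exists (steiner_entry p B0 j * steiner_entry q B0 l).
  by rewrite normrM !steiner_entry_norm ?mulr1 // inE B0bl.
rewrite (bigD1 B0) //= big1 ?addr0 // => B /andP[Bbl BB0].
have : B \notin [set B in bl | (p \in B) && (q \in B)] by rewrite pqB0 inE.
rewrite inE Bbl /= negb_and => /orP[pB|qB].
  by rewrite steiner_entry_out ?mul0r // inE (negbTE pB) andbF.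
by rewrite [steiner_entry q B l]steiner_entry_out ?mulr0 // inE (negbTE qB) andbF.
Qed.

Lemma sum_steiner_entry_row p B B' : B \in bl -> B' \in bl ->
  \sum_j steiner_entry p B j * steiner_entry p B' j = ((p \in B) && (B == B'))%:R * h%:R.
Proof.
case: H_had => _ row _ Bbl B'bl.
case pB : (p \in B); last first.
  by rewrite big1 ?mul0r // => j _; rewrite steiner_entry_out ?mul0r // inE pB andbF.
have /block_index_some[a Ba] : B \in blocks_at p by rewrite inE Bbl pB.
case pB' : (p \in B'); last first.
  have -> : (B == B') = false by apply: contraFF pB' => /eqP <-.
  by rewrite big1 ?mul0r // => j _; rewrite [steiner_entry p B' j]steiner_entry_out ?mulr0
    // inE pB' andbF.
have /block_index_some[a' B'a'] : B' \in blocks_at p by rewrite inE B'bl pB'.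
rewrite /steiner_entry Ba B'a' /= row (inj_eq lift_inj).
suff -> : (a == a') = (B == B') by [].
apply/eqP/eqP => [aa'|BB']; first by apply: block_index_inj Ba _; rewrite B'a' aa'.
by move: B'a'; rewrite -BB' Ba => -[].
Qed.

Lemma sum_steiner_entry_col p B : \sum_j steiner_entry p B j = 0.
Proof.
case: H_had => _ row _.
have [/block_index_some[a Ba]|pB] := boolP (B \in blocks_at p); last first.
  by rewrite big1 // => j _; rewrite steiner_entry_out.
rewrite /steiner_entry Ba /=.
transitivity (\sum_j H (lift ord0 a) j * H ord0 j).
  by apply: eq_bigr => j _; rewrite H_row0 mulr1.
by rewrite row eq_sym (negbTE (neq_lift _ _)) mul0r.
Qed.

Variable X : P + unit -> 'I_h * bool -> R.
Hypothesis X_had : hadamard_fun h.*2 X.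

Let sqrt2E : Num.sqrt 2 * Num.sqrt 2 = 2 :> R.
Proof. by rewrite -expr2 sqr_sqrtr // ler0n. Qed.

Let sqrt3E : Num.sqrt 3 * Num.sqrt 3 = 3 :> R.
Proof. by rewrite -expr2 sqr_sqrtr // ler0n. Qed.

Let X_norm r e : `|X r e| = 1.
Proof. by case: X_had => pm _ _; case: (pm r e) => ->; rewrite ?normrN normr1. Qed.

Local Notation frame_index := ((P * 'I_h) + ('I_h * bool))%type.
Local Notation coord_index := ({B : {set P} | B \in bl} + (P + unit))%type.

Definition coord_weight (r : P + unit) : R := if r is inr _ then Num.sqrt 3 else 1.

Definition frame_entry (c : frame_index) (t : coord_index) : R :=
  match c, t with
  | inl (p, j), inl B => Num.sqrt 2 * steiner_entry p (val B) j
  | inl (p, _), inr (inl q) => (p == q)%:R * 2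
  | inl _, inr (inr _) => 0
  | inr _, inl _ => 0
  | inr e, inr r => X r e * coord_weight r
  end.

Local Notation gram c c' := (\sum_t frame_entry c t * frame_entry c' t).
Local Notation frame_op t t' := (\sum_c frame_entry c t * frame_entry c t').

Lemma sum_point_coord (p : P) (G : P -> R) : \sum_q (p == q)%:R * G q = G p.
Proof.
rewrite (bigD1 p) //= eqxx mul1r big1 ?addr0 // => q qp.
by rewrite eq_sym (negbTE qp) mul0r.
Qed.

Lemma gram_steiner p j q l : gram (inl (p, j)) (inl (q, l)) =
  2 * \sum_(B in bl) steiner_entry p B j * steiner_entry q B l + (p == q)%:R * 4.
Proof.
rewrite !big_sumType /= sum_unit mulr0 addr0; congr (_ + _).
  rewrite [RHS]big_distrr [RHS]big_sub /=; apply: eq_bigr => B _.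
  by rewrite mulrACA sqrt2E.
under eq_bigr => r _ do rewrite -mulrA.
by rewrite sum_point_coord eq_sym; case: (p == q) => /=; ring.
Qed.

Lemma gram_steiner_hadamard p j e : gram (inl (p, j)) (inr e) = 2 * X (inl p) e.
Proof.
rewrite !big_sumType /= sum_unit mul0r addr0 big1 ?add0r; last by move=> B _; rewrite mulr0.
by under eq_bigr => r _ do rewrite -mulrA; rewrite sum_point_coord mulr1 mulrC.
Qed.

Lemma gram_hadamard e e' : gram (inr e) (inr e') =
  (e == e')%:R * (h.*2)%:R + 2 * (X (inr tt) e * X (inr tt) e').
Proof.
case: X_had => _ _ col.
rewrite !big_sumType /= sum_unit big1 ?add0r; last by move=> B _; rewrite mulr0.
rewrite -col big_sumType /= sum_unit -addrA; congr (_ + _).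
  by apply: eq_bigr => q _; rewrite !mulr1.
by rewrite mulrACA sqrt3E; ring.
Qed.

Lemma gram_sym c c' : gram c c' = gram c' c.
Proof. by apply: eq_bigr => t _; rewrite mulrC. Qed.

Lemma frame_entry_norm c : gram c c = (h.*2 + 2)%:R.
Proof.
case: c => [[p j]|e].
  by rewrite gram_steiner sum_steiner_entry_same !eqxx -muln2 natrD natrM /=; ring.
by rewrite gram_hadamard eqxx (hadamard_fun_sq X_had) mul1r mulr1 natrD.
Qed.

Lemma frame_entry_angle c c' : c != c' -> `|gram c c'| = 2.
Proof.
case: c => [[p j]|e]; case: c' => [[q l]|e'] cc'.
- rewrite gram_steiner; case: (eqVneq p q) cc' => [<- cc'|pq _].
    rewrite sum_steiner_entry_same.
    have -> : (j == l) = false by apply: contraNF cc' => /eqP ->.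
    have -> : 2 * (0 * h%:R - 1) + 1 * 4 = 2 :> R by ring.
    by rewrite ger0_norm.
  have [s s1 ->] := sum_steiner_entry_diff j l pq.
  by rewrite mul0r addr0 normrM s1 mulr1 ger0_norm.
- by rewrite gram_steiner_hadamard normrM X_norm mulr1 ger0_norm.
- by rewrite gram_sym gram_steiner_hadamard normrM X_norm mulr1 ger0_norm.
- rewrite gram_hadamard.
  have -> : (e == e') = false by apply: contraNF cc' => /eqP ->.
  by rewrite mul0r add0r normrM normrM !X_norm !mulr1 ger0_norm.
Qed.

Lemma sum_indicator (A : {set P}) (c : R) : \sum_p (p \in A)%:R * c = #|A|%:R * c.
Proof.
rewrite -big_distrl /=; congr (_ * _).
rewrite -sumr_const [RHS]big_mkcond; apply: eq_bigr => p _.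
by case: (p \in A).
Qed.

Lemma frame_op_blocks (B B' : {B | B \in bl}) :
  frame_op (inl B) (inl B') = (B == B')%:R * (h * 6)%:R.
Proof.
rewrite big_sumType /= sum_pair [X in _ + X]big1 ?addr0; last by move=> e _; rewrite mulr0.
transitivity (2 * \sum_p \sum_j steiner_entry p (val B) j * steiner_entry p (val B') j).
  rewrite big_distrr; apply: eq_bigr => p _; rewrite big_distrr; apply: eq_bigr => j _.
  by rewrite mulrACA sqrt2E.
under eq_bigr => p _ do rewrite sum_steiner_entry_row ?(valP B) ?(valP B') //.
have [<-|BB'] := eqVneq B B'.
  under eq_bigr => p _ do rewrite eqxx andbT.
  by rewrite sum_indicator (sts_block_card bl_sts (valP B)) natrM /=; ring.
rewrite big1 ?mulr0 ?mul0r // => p _.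
by rewrite (inj_eq val_inj) (negbTE BB') andbF mul0r.
Qed.

Lemma frame_op_block_point (B : {B | B \in bl}) r : frame_op (inl B) (inr r) = 0.
Proof.
rewrite big_sumType /= sum_pair [X in _ + X]big1 ?addr0; last by move=> e _; rewrite mul0r.
case: r => [q|u]; last by rewrite big1 // => p _; rewrite big1 // => j _; rewrite mulr0.
rewrite (bigD1 q) //= [X in _ + X]big1 ?addr0 => [|p pq]; last first.
  by rewrite big1 // => j _; rewrite (negbTE pq) mul0r mulr0.
by rewrite eqxx -big_distrl /= -big_distrr /= sum_steiner_entry_col mulr0 mul0r.
Qed.

Lemma frame_op_points r r' : frame_op (inr r) (inr r') = (r == r')%:R * (h * 6)%:R.
Proof.
case: X_had => _ row _.
rewrite big_sumType /= sum_pair.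
have -> : \sum_e frame_entry (inr e) (inr r) * frame_entry (inr e) (inr r') =
          coord_weight r * coord_weight r' * ((r == r')%:R * (h.*2)%:R).
  by rewrite -row big_distrr; apply: eq_bigr => e _ /=; ring.
case: r => [q|[]]; case: r' => [q'|[]] /=.
- rewrite (bigD1 q) //= [X in _ + X + _]big1 ?addr0 => [|p pq]; last first.
    by rewrite big1 // => j _; rewrite (negbTE pq) !mul0r.
  rewrite eqxx sumr_const card_ord (inj_eq inl_inj).
  by case: (q == q'); rewrite /= -?muln2 ?natrM; ring.
- rewrite big1 => [|p _]; last by rewrite big1 // => j _; rewrite mulr0.
  by rewrite !(mul0r, mulr0, add0r).
- rewrite big1 => [|p _]; last by rewrite big1 // => j _; rewrite mul0r.
  by rewrite !(mul0r, mulr0, add0r).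
- rewrite big1 ?add0r => [|p _]; last by rewrite big1 // => j _; rewrite mul0r.
  by rewrite sqrt3E natrM -muln2 natrM; ring.
Qed.

Lemma frame_entry_tight t t' : frame_op t t' = (t == t')%:R * (h * 6)%:R.
Proof.
have frame_op_sym u u' : frame_op u u' = frame_op u' u.
  by apply: eq_bigr => c _; rewrite mulrC.
case: t => [B|r]; case: t' => [B'|r'].
- exact: frame_op_blocks.
- by rewrite frame_op_block_point mul0r.
- by rewrite frame_op_sym frame_op_block_point mul0r.
- by rewrite frame_op_points (inj_eq inr_inj).
Qed.

Lemma card_frame_index : #|{: frame_index}| = (h * (2 * h + 1))%N.
Proof.
rewrite card_sum !card_prod card_ord card_bool card_P doubleS /=.
by rewrite -!muln2; nia.
Qed.

Lemma card_coord_index : #|{: coord_index}| = ((h + 1) * (2 * h + 1) %/ 3)%N.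
Proof.
rewrite card_sum card_sum card_unit card_sig.
have -> : #|[pred B | B \in bl]| = #|bl| by apply: eq_card.
have blE := sts_num_blocks bl_sts; rewrite card_P doubleS /= in blE.
have -> : ((h + 1) * (2 * h + 1) = 3 * (#|bl| + (k.*2.+1 + 1)))%N.
  by move: blE; set b := #|bl|; rewrite -!muln2; nia.
by rewrite card_P doubleS mulKn.
Qed.

End SteinerFrame.

Lemma is_ETF_of_tight_equiangular (R : realType) (C T : finType) (N M : nat)
    (phi : C -> T -> R) (a b c : R) :
  #|C| = N -> #|T| = M -> a != 0 ->
  (forall x, \sum_t phi x t * phi x t = a) ->
  (forall x y, x != y -> `|\sum_t phi x t * phi y t| = b) ->
  (forall t t', \sum_x phi x t * phi x t' = (t == t')%:R * c) ->
  exists v : 'I_N -> 'cV[R]_M, is_ETF v.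
Proof.
move=> card_C card_T a_neq0 phi_norm phi_angle phi_tight.
have EC : #|{: 'I_N}| = #|C| by rewrite card_ord.
have ET : #|{: 'I_M}| = #|T| by rewrite card_ord.
pose v i : 'cV[R]_M := \col_m phi (card_bij EC i) (card_bij ET m).
have dotvE i j : dotv (v i) (v j) =
    \sum_t phi (card_bij EC i) t * phi (card_bij EC j) t.
  rewrite /dotv !mxE [RHS](reindex _ (onW_bij _ (card_bij_bij ET))).
  by apply: eq_bigr => m _; rewrite !mxE.
have bijC_eq i j : (card_bij EC i == card_bij EC j) = (i == j).
  exact: (bij_eq (card_bij_bij EC)).
exists v; split.
- move=> i; apply: contra a_neq0 => /eqP vi0.
  by rewrite -(phi_norm (card_bij EC i)) -dotvE vi0 /dotv trmx0 mul0mx mxE.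
- by move=> i j; rewrite !dotvE !phi_norm.
- by move=> i j i' j' ij i'j'; rewrite !dotvE !phi_angle ?bijC_eq.
- exists c; apply/matrixP => m m'; rewrite summxE mxE.
  rewrite -mulr_natl -(bij_eq (card_bij_bij ET)) -phi_tight.
  rewrite [RHS](reindex _ (onW_bij _ (card_bij_bij EC))).
  by apply: eq_bigr => i _; rewrite !mxE big_ord1 !mxE.
Qed.

Unset Implicit Arguments.

Theorem corollary3p3 (R : realType) (h : nat) :
  (exists H : 'M[R]_h, is_hadamard H) ->
  (h %% 3 = 1 \/ h %% 3 = 2)%N ->
  exists phi : 'I_(h * (2 * h + 1)) -> 'cV[R]_(((h + 1) * (2 * h + 1)) %/ 3),
    is_ETF phi.
Proof.
move=> [H H_had] hmod3.
case: h H H_had hmod3 => [|k] H H_had hmod3; first by case: hmod3.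
have [P [bl [card_P bl_sts]]] := sts_exists hmod3.
have Hn_had := hadamard_fun_normalize (hadamard_mx_fun H_had) ord0.
have Hn_row0 j : H ord0 j * H ord0 j = 1 := hadamard_fun_sq (hadamard_mx_fun H_had) ord0 j.
have card_points : #|{: P + unit}| = #|{: 'I_k.+1 * bool}|.
  by rewrite card_sum card_unit card_P card_prod card_ord card_bool; lia.
have X_had := hadamard_fun_reindex (hadamard_fun_double Hn_had) (card_bij_bij card_points).
apply: is_ETF_of_tight_equiangular (card_frame_index card_P)
  (card_coord_index bl_sts card_P) _ (frame_entry_norm bl_sts card_P Hn_had Hn_row0 X_had)
  (frame_entry_angle bl_sts card_P Hn_had Hn_row0 X_had)
  (frame_entry_tight bl_sts card_P Hn_had Hn_row0 X_had).
by rewrite pnatr_eq0.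
Qed.
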